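(* Let $\alpha\in(0,1)$ be irrational with $\alpha=[0;a_1,a_2,\dots]$, and set $a_0=0$. For every $n\ge1$ define a finite block $B_n$ of integers as follows. (1) If $a_n\ge3$: $B_n=(q_{n-2}+q_{n-1},\;2q_{n-1},\;q_n-q_{n-1})$. (2) If $a_n=2$: $B_n=(q_n-q_{n-1})$. (3) If $a_{n-1}\ne1$, $a_n=1$, $a_{n+1}\ge2$: $B_n=(2q_{n-2}+q_{n-1})$ (note $2q_{n-2}+q_{n-1}=q_{n-2}+q_n$). (4) If $r\ge2$ and $a_{n-1}\ne1$, $a_n=a_{n+1}=\dots=a_{n+r-1}=1$, $a_{n+r}\ge2$: the $r$ indices $n,\dots,n+r-1$ of this maximal run of ones together are given the block $(2q_{n-2}+q_{n-1},\;2q_{n-1},\;2q_n,\;\dots,\;2q_{n+r-2},\;2q_{n+r-3}+q_{n+r-2})$. (5) If $a_{n-1}\ne1$ and $a_j=1$ for all $j\ge n$: the indices $j\ge n$ together are given the infinite block $(2q_{n-2}+q_{n-1},\;2q_{n-1},\;2q_n,\;2q_{n+1},\;\dots)$. Then the sequence $\mathfrak Q$ is obtained from the sequence $(a_1,a_2,a_3,\dots)$ by replacing each partial quotient (respectively each maximal run of ones) by the corresponding block and concatenating the blocks in order of increasing index; more precisely, this concatenation, after deleting repeated values, is exactly the increasing enumeration $\mathfrak q_1=1<\mathfrak q_2<\mathfrak q_3<\cdots$ of $\mathfrak Q$.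
   Context: Let $\alpha$ be an irrational real number in $(0,1)$ with continued fraction expansion $\alpha=[0;a_1,a_2,\dots]$ (the $a_i$ positive integers). Convergents: $p_n/q_n=[0;a_1,\dots,a_n]$ for $n\ge1$, with $p_{-1}=1,q_{-1}=0,p_0=0,q_0=1$, so that $q_n=a_nq_{n-1}+q_{n-2}$ and $p_n=a_np_{n-1}+p_{n-2}$. For real $t\ge1$ define $\psi^{[2]}_\alpha(t)=\min\{|q\alpha-p| : p,q\in\mathbb Z,\ 1\le q\le t,\ (p,q)\ne(p_n,q_n)\text{ for all }n\ge0\}$. Let $\mathfrak Q$ be the set consisting of $1$ together with all integers $t\ge2$ such that $\psi^{[2]}_\alpha(t)<\psi^{[2]}_\alpha(t-1)$ (the points of discontinuity of $\psi^{[2]}_\alpha$), enumerated increasingly as $\mathfrak q_1=1<\mathfrak q_2<\cdots$. *)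

From Stdlib Require Import Reals ZArith Arith List.
Import ListNotations.
Open Scope R_scope.

(* Shifted denominators/numerators of convergents:
   qs a k = q_{k-1}, ps a k = p_{k-1}  (so q_{-1}=0, q_0=1, p_{-1}=1, p_0=0),
   with q_n = a_n q_{n-1} + q_{n-2}, p_n = a_n p_{n-1} + p_{n-2}. *)
Fixpoint qs (a : nat -> nat) (k : nat) : nat :=
  match k with
  | O => 0%nat
  | S k' => match k' with
            | O => 1%nat
            | S k'' => (a k' * qs a k' + qs a k'')%nat
            end
  end.

Fixpoint ps (a : nat -> nat) (k : nat) : nat :=
  match k with
  | O => 1%nat
  | S k' => match k' with
            | O => 0%nat
            | S k'' => (a k' * ps a k' + ps a k'')%nat
            end
  end.

Definition qn (a : nat -> nat) (n : nat) : nat := qs a (S n).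
Definition pn (a : nat -> nat) (n : nat) : nat := ps a (S n).

Definition irrational (x : R) : Prop :=
  forall p q : Z, q <> 0%Z -> x * IZR q <> IZR p.

Definition admissible (a : nat -> nat) (t : nat) (p q : Z) : Prop :=
  (1 <= q)%Z /\ (q <= Z.of_nat t)%Z /\
  forall n : nat, ~ (p = Z.of_nat (pn a n) /\ q = Z.of_nat (qn a n)).

Definition psi2 (alpha : R) (a : nat -> nat) (t : nat) (v : R) : Prop :=
  (exists p q : Z, admissible a t p q /\ v = Rabs (IZR q * alpha - IZR p)) /\
  (forall p q : Z, admissible a t p q -> v <= Rabs (IZR q * alpha - IZR p)).

Definition inQ (alpha : R) (a : nat -> nat) (t : nat) : Prop :=
  t = 1%nat \/
  ((2 <= t)%nat /\ exists v w : R,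
     psi2 alpha a t v /\ psi2 alpha a (t - 1) w /\ v < w).

(* The block contributed by index n >= 1.  In terms of qs:
   q_{n-2} = qs a (n-1), q_{n-1} = qs a n, q_n = qs a (n+1).
   A maximal run of ones a_n = ... = a_{n+r-1} = 1 (a_{n-1} <> 1) has block
   (2q_{n-2}+q_{n-1}, 2q_{n-1}, 2q_n, ..., 2q_{n+r-2}, 2q_{n+r-3}+q_{n+r-2})
   (or its infinite analogue); it is split here over the indices of the run:
   index j of the run contributes 2q_{j-1}, preceded by 2q_{j-2}+q_{j-1} if j
   starts the run, followed by 2q_{j-2}+q_{j-1} if j ends the run; when the
   run has length one (case (3)) the single entry 2q_{n-2}+q_{n-1} is used.
   Concatenating these pieces gives exactly the run's block. *)
Definition block (a : nat -> nat) (n : nat) : list nat :=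
  if (3 <=? a n)%nat then
    [ (qs a (n - 1) + qs a n)%nat ; (2 * qs a n)%nat ; (qs a (S n) - qs a n)%nat ]
  else if (a n =? 2)%nat then
    [ (qs a (S n) - qs a n)%nat ]
  else
    let start := negb (a (n - 1) =? 1)%nat in
    let stop  := negb (a (S n) =? 1)%nat in
    match start, stop with
    | true, true   => [ (2 * qs a (n - 1) + qs a n)%nat ]
    | true, false  => [ (2 * qs a (n - 1) + qs a n)%nat ; (2 * qs a n)%nat ]
    | false, false => [ (2 * qs a n)%nat ]
    | false, true  => [ (2 * qs a n)%nat ; (2 * qs a (n - 1) + qs a n)%nat ]
    end.

(* k-th entry (0-based) of the concatenation B_1 B_2 B_3 ... ; every block is
   nonempty so the first k+1 blocks already contain position k. *)
Definition Qseq (a : nat -> nat) (k : nat) : nat :=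
  nth k (flat_map (block a) (seq 1 (S k))) 0%nat.

From Stdlib Require Import Reals ZArith Arith List Lra Lia Psatz Sorted.
Import ListNotations.
Open Scope R_scope.

(* Write every integer point (p, q) as x (p_{c-1}, q_{c-1}) + y (p_c, q_c) in the basis of two
   consecutive convergents; then |q alpha - p| = |x delta_{c-1} - y delta_c| with
   delta_k = |q_k alpha - p_k| positive and decreasing, and below q_{c-1} + q_c the coordinates
   have opposite signs, so the distance is |x| delta_{c-1} + |y| delta_c.  Each block entry t
   is the denominator of a non-convergent point whose distance w is attained at t, and an
   elementary analysis of the small coordinates shows that no non-convergent point with
   denominator below the next entry t' comes closer than w.  Hence psi^[2] equals w on
   [t, t') and drops strictly at t', so the entries, read in order, are the jumps of psi^[2]. *)

Lemma Un_cv_const (c : R) : Un_cv (fun _ => c) c.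
Proof.
  intros eps Heps. exists 0%nat. intros n _.
  unfold R_dist. rewrite Rminus_diag, Rabs_R0. exact Heps.
Qed.

Lemma Un_cv_affine_nonneg (u : nat -> R) (l c d : R) (N : nat) :
  Un_cv u l -> (forall m, (N <= m)%nat -> 0 <= c * u m + d) -> 0 <= c * l + d.
Proof.
  intros Hu Hm.
  apply (Rle_cv_lim (Un := fun _ => 0) (Vn := fun n => c * u (n + N)%nat + d)).
  - intros n. apply Hm. lia.
  - apply Un_cv_const.
  - apply CV_plus; [apply CV_mult; [apply Un_cv_const | apply CV_shift'; exact Hu]|].
    apply Un_cv_const.
Qed.

Section LocallySortedFacts.
Variables (T : Type) (Rel : T -> T -> Prop).

Lemma LocallySorted_nth (l : list T) (i : nat) (x0 : T) :
  LocallySorted Rel l -> (S i < length l)%nat -> Rel (nth i l x0) (nth (S i) l x0).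
Proof.
  intros Hl. revert i. induction Hl as [|x|x y l Hl IH Hxy]; intros i Hi; simpl in Hi; [lia|lia|].
  destruct i as [|i]; [exact Hxy|].
  apply (IH i). simpl. lia.
Qed.

Lemma LocallySorted_app (l1 l2 : list T) (x0 : T) :
  LocallySorted Rel l1 -> LocallySorted Rel l2 ->
  (l1 <> [] -> l2 <> [] -> Rel (last l1 x0) (hd x0 l2)) ->
  LocallySorted Rel (l1 ++ l2).
Proof.
  intros H1 H2. induction H1 as [|x|x y l Hl IH Hxy]; intros Hjoin.
  - exact H2.
  - destruct l2 as [|y l2]; [constructor|].
    constructor; [exact H2|]. apply Hjoin; discriminate.
  - simpl. constructor; [exact (IH ltac:(intros _; exact (Hjoin ltac:(discriminate))))|exact Hxy].
Qed.

End LocallySortedFacts.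

Section ContinuedFraction.

Variable a : nat -> nat.
Variable alpha : R.

(* Indices are shifted as in [qs]: [qz k] is q_{k-1}, [pz k] is p_{k-1},
   and [delta k] is |q_{k-1} alpha - p_{k-1}|. *)
Definition qz (k : nat) : Z := Z.of_nat (qs a k).
Definition pz (k : nat) : Z := Z.of_nat (ps a k).
Definition az (k : nat) : Z := Z.of_nat (a k).

Lemma qz_SS k : qz (S (S k)) = (az (S k) * qz (S k) + qz k)%Z.
Proof. unfold qz, az. simpl qs. lia. Qed.

Lemma pz_SS k : pz (S (S k)) = (az (S k) * pz (S k) + pz k)%Z.
Proof. unfold pz, az. simpl ps. lia. Qed.

Lemma qz_nonneg k : (0 <= qz k)%Z.
Proof. unfold qz. lia. Qed.

Fixpoint alt_sign (k : nat) : Z :=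
  match k with O => (-1)%Z | S k' => (- alt_sign k')%Z end.

Lemma alt_sign_sqr k : (alt_sign k * alt_sign k = 1)%Z.
Proof. induction k; simpl; lia. Qed.

Lemma Rabs_alt_sign k : Rabs (IZR (alt_sign k)) = 1.
Proof.
  pose proof (alt_sign_sqr k) as Hs.
  assert (alt_sign k = 1 \/ alt_sign k = -1)%Z as [-> | ->] by nia.
  - apply Rabs_R1.
  - rewrite Rabs_left; simpl; lra.
Qed.

Lemma convergent_det k : (pz (S k) * qz k - pz k * qz (S k) = alt_sign k)%Z.
Proof.
  induction k as [|k IH]; [reflexivity|].
  simpl alt_sign. rewrite qz_SS, pz_SS, <- IH. ring.
Qed.

Lemma convergent_coords c p q : exists x y : Z,
  p = (x * pz c + y * pz (S c))%Z /\ q = (x * qz c + y * qz (S c))%Z.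
Proof.
  pose proof (convergent_det c) as Hd. pose proof (alt_sign_sqr c) as Hs.
  exists (alt_sign c * (q * pz (S c) - p * qz (S c)))%Z,
         (alt_sign c * (p * qz c - q * pz c))%Z.
  split; [transitivity (alt_sign c * alt_sign c * p)%Z
         |transitivity (alt_sign c * alt_sign c * q)%Z];
    solve [rewrite Hs; ring | rewrite <- Hd at 2; ring].
Qed.

Lemma convergent_coords_eq0 c x y :
  (x * pz c + y * pz (S c) = 0)%Z -> (x * qz c + y * qz (S c) = 0)%Z ->
  x = 0%Z /\ y = 0%Z.
Proof.
  intros Hp Hq. pose proof (convergent_det c) as Hd. pose proof (alt_sign_sqr c) as Hs.
  split; [transitivity (alt_sign c * alt_sign c * x)%Z
         |transitivity (alt_sign c * alt_sign c * y)%Z];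
    try (rewrite Hs; ring); rewrite <- Hd at 2.
  - transitivity (alt_sign c * (pz (S c) * (x * qz c + y * qz (S c))
                               - qz (S c) * (x * pz c + y * pz (S c))))%Z; [ring|].
    rewrite Hp, Hq. ring.
  - transitivity (alt_sign c * (qz c * (x * pz c + y * pz (S c))
                               - pz c * (x * qz c + y * qz (S c))))%Z; [ring|].
    rewrite Hp, Hq. ring.
Qed.

Definition dist (p q : Z) : R := Rabs (IZR q * alpha - IZR p).

Definition err (k : nat) : R := IZR (qz k) * alpha - IZR (pz k).

Definition delta (k : nat) : R := IZR (alt_sign k) * err k.

Lemma delta_SS k : delta k = IZR (az (S k)) * delta (S k) + delta (S (S k)).
Proof.
  unfold delta, err. rewrite qz_SS, pz_SS. simpl alt_sign.
  rewrite !opp_IZR, !plus_IZR, !mult_IZR. ring.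
Qed.

Lemma dist_convergent_coords c x y :
  dist (x * pz c + y * pz (S c)) (x * qz c + y * qz (S c)) =
  Rabs (IZR x * delta c - IZR y * delta (S c)).
Proof.
  assert (Hs : IZR (alt_sign c) * IZR (alt_sign c) = 1)
    by (rewrite <- mult_IZR, alt_sign_sqr; reflexivity).
  unfold dist. rewrite <- (Rmult_1_l (_ - _)), <- Hs, Rmult_assoc, Rabs_mult, Rabs_alt_sign,
    Rmult_1_l.
  f_equal. unfold delta, err. simpl alt_sign. rewrite opp_IZR, !plus_IZR, !mult_IZR. ring.
Qed.

Hypothesis a_0 : a 0 = 0%nat.
Hypothesis a_pos : forall n, (1 <= n)%nat -> (1 <= a n)%nat.
Hypothesis alpha_irrational : irrational alpha.
Hypothesis convergents_cv : Un_cv (fun n => INR (pn a n) / INR (qn a n)) alpha.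

Lemma az_pos n : (1 <= n)%nat -> (1 <= az n)%Z.
Proof. intros Hn. specialize (a_pos n Hn). unfold az. lia. Qed.

Lemma qz_pos k : (1 <= k)%nat -> (1 <= qz k)%Z.
Proof.
  intros Hk. destruct k as [|k]; [lia|]. clear Hk.
  induction k as [|k IH]; [reflexivity|].
  rewrite qz_SS. pose proof (az_pos (S k)). pose proof (qz_nonneg k). nia.
Qed.

Lemma qz_le_S k : (qz k <= qz (S k))%Z.
Proof.
  destruct k as [|k]; [unfold qz; simpl; lia|].
  rewrite qz_SS. pose proof (az_pos (S k)). pose proof (qz_pos (S k)).
  pose proof (qz_nonneg k). nia.
Qed.

Lemma qz_le i j : (i <= j)%nat -> (qz i <= qz j)%Z.
Proof. induction 1; [lia|]. pose proof (qz_le_S m). lia. Qed.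

Lemma qz_ge_index k : (Z.of_nat k <= qz (S k))%Z.
Proof.
  induction k as [|k IH]; [unfold qz; simpl; lia|].
  rewrite qz_SS. pose proof (az_pos (S k)). pose proof (qz_nonneg (S k)).
  destruct k as [|k]; [unfold qz; simpl; lia|].
  pose proof (qz_pos (S k)). nia.
Qed.

Lemma cross_det_sign k m :
  (k < m)%nat -> (1 <= alt_sign k * (qz k * pz m - pz k * qz m))%Z.
Proof.
  intros Hkm. pose proof (convergent_det k). pose proof (alt_sign_sqr k).
  assert (Hd : forall d, (0 <= alt_sign k * (qz k * pz (k + d) - pz k * qz (k + d)) /\
                         1 <= alt_sign k * (qz k * pz (S (k + d)) - pz k * qz (S (k + d))))%Z).
  { induction d as [|d [IH0 IH1]]; [rewrite Nat.add_0_r; split; nia|].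
    rewrite <- plus_n_Sm. split; [lia|].
    rewrite qz_SS, pz_SS. pose proof (az_pos (S (k + d)) ltac:(lia)). nia. }
  replace m with (S (k + (m - S k))) by lia. apply Hd.
Qed.

(* [alt_sign k * (qz k * (pz m / qz m) - pz k)] is positive for m > k ([cross_det_sign]);
   pass to the limit m -> oo. *)
Lemma delta_nonneg k : 0 <= delta k.
Proof.
  unfold delta, err.
  replace (_ * _) with (IZR (alt_sign k * qz k) * alpha + - IZR (alt_sign k * pz k))
    by (rewrite !mult_IZR; ring).
  apply (Un_cv_affine_nonneg _ _ _ _ k convergents_cv). intros m Hm.
  unfold pn, qn. rewrite !INR_IZR_INZ. fold (pz (S m)) (qz (S m)).
  pose proof (qz_pos (S m) ltac:(lia)) as Hq.
  apply IZR_le in Hq.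
  replace (_ + _) with (IZR (alt_sign k * (qz k * pz (S m) - pz k * qz (S m))) / IZR (qz (S m)))
    by (rewrite !mult_IZR, minus_IZR, !mult_IZR; field; lra).
  apply Rle_mult_inv_pos; [|lra].
  apply IZR_le. pose proof (cross_det_sign k (S m) ltac:(lia)). lia.
Qed.

Lemma delta_pos k : 0 < delta k.
Proof.
  destruct (Rle_lt_or_eq_dec _ _ (delta_nonneg k)) as [Hlt|Heq]; [exact Hlt|exfalso].
  unfold delta in Heq. symmetry in Heq. apply Rmult_integral in Heq as [Hs|He].
  - pose proof (alt_sign_sqr k). apply eq_IZR_R0 in Hs. rewrite Hs in *. lia.
  - unfold err in He. destruct k as [|k]; [unfold qz, pz in He; simpl in He; lra|].
    apply (alpha_irrational (pz (S k)) (qz (S k))); [pose proof (qz_pos (S k)); lia|lra].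
Qed.

Lemma delta_lt_S k : delta (S k) < delta k.
Proof.
  rewrite (delta_SS k). pose proof (delta_pos (S k)). pose proof (delta_pos (S (S k))).
  assert (1 <= IZR (az (S k))) by (apply IZR_le, az_pos; lia). nra.
Qed.

Definition not_convergent (p q : Z) : Prop :=
  forall n, ~ (p = Z.of_nat (pn a n) /\ q = Z.of_nat (qn a n)).

Definition dist_ge_upto (B : Z) (w : R) : Prop :=
  forall p q, not_convergent p q -> (1 <= q)%Z -> (q < B)%Z -> w <= dist p q.

Lemma not_convergent_neq k p q :
  not_convergent p q -> (1 <= q)%Z -> p = pz k -> q = qz k -> False.
Proof.
  intros Hnc Hq Hp Hqk. destruct k as [|k]; [unfold qz in Hqk; simpl in Hqk; lia|].
  exact (Hnc k (conj Hp Hqk)).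
Qed.

(* Below [qz c + qz (S c)] a positive denominator has coordinates of opposite signs,
   hence distance [|x| delta c + |y| delta (S c)]. *)
Lemma dist_ge_upto_of_coords c B w :
  (1 <= c)%nat -> (B <= qz c + qz (S c))%Z ->
  (forall x y : Z,
     (1 <= x * qz c + y * qz (S c) < B)%Z ->
     not_convergent (x * pz c + y * pz (S c)) (x * qz c + y * qz (S c)) ->
     (x * y <= 0)%Z ->
     w <= IZR (Z.abs x) * delta c + IZR (Z.abs y) * delta (S c)) ->
  dist_ge_upto B w.
Proof.
  intros Hc HB Hw p q Hnc Hq1 HqB.
  destruct (convergent_coords c p q) as (x & y & -> & ->).
  rewrite dist_convergent_coords.
  pose proof (qz_pos c Hc). pose proof (qz_pos (S c) ltac:(lia)).
  assert (Hxy : (x * y <= 0)%Z) by (destruct (Z.le_gt_cases x 0), (Z.le_gt_cases y 0); nia).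
  specialize (Hw x y (conj Hq1 HqB) Hnc Hxy).
  pose proof (delta_pos c). pose proof (delta_pos (S c)).
  assert ((0 <= x /\ y <= 0) \/ (x <= 0 /\ 0 <= y))%Z as [[Hx Hy]|[Hx Hy]] by nia.
  - rewrite Z.abs_eq, Z.abs_neq, opp_IZR in Hw by lia.
    apply IZR_le in Hx, Hy. rewrite Rabs_right by nra. lra.
  - rewrite Z.abs_neq, Z.abs_eq, opp_IZR in Hw by lia.
    apply IZR_le in Hx, Hy. rewrite Rabs_left1 by nra. lra.
Qed.

Lemma lincomb_le (X Y m n : Z) (d0 d1 : R) :
  0 < d1 -> d1 < d0 -> (m <= X)%Z -> (m + n <= X + Y)%Z ->
  IZR m * d0 + IZR n * d1 <= IZR X * d0 + IZR Y * d1.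
Proof.
  intros H1 H01 HX HXY. apply IZR_le in HX, HXY. rewrite !plus_IZR in HXY.
  assert (0 <= (IZR X - IZR m) * (d0 - d1)) by (apply Rmult_le_pos; lra).
  assert (0 <= (IZR X + IZR Y - IZR m - IZR n) * d1) by (apply Rmult_le_pos; lra).
  nra.
Qed.

Lemma dist_ge_upto_of_coeffs c B (m n : Z) :
  (1 <= c)%nat -> (B <= qz c + qz (S c))%Z ->
  (forall x y : Z,
     (1 <= x * qz c + y * qz (S c) < B)%Z ->
     not_convergent (x * pz c + y * pz (S c)) (x * qz c + y * qz (S c)) ->
     (x * y <= 0)%Z ->
     (m <= Z.abs x /\ m + n <= Z.abs x + Z.abs y)%Z) ->
  dist_ge_upto B (IZR m * delta c + IZR n * delta (S c)).
Proof.
  intros Hc HB Hmn. apply (dist_ge_upto_of_coords c); [exact Hc|exact HB|].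
  intros x y Hq Hnc Hxy. destruct (Hmn x y Hq Hnc Hxy).
  apply lincomb_le; [apply delta_pos|apply delta_lt_S|lia|lia].
Qed.

Lemma not_convergent_coords c x y :
  not_convergent (x * pz c + y * pz (S c)) (x * qz c + y * qz (S c)) ->
  (1 <= x * qz c + y * qz (S c))%Z ->
  (x <> 1 \/ y <> 0)%Z /\ (x <> 0 \/ y <> 1)%Z.
Proof.
  intros Hnc Hq. split.
  - destruct (Z.eq_dec x 1), (Z.eq_dec y 0); try tauto. subst.
    exfalso. apply (not_convergent_neq c _ _ Hnc Hq); ring.
  - destruct (Z.eq_dec x 0), (Z.eq_dec y 1); try tauto. subst.
    exfalso. apply (not_convergent_neq (S c) _ _ Hnc Hq); ring.
Qed.

Lemma not_convergent_coords_prev m x y :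
  not_convergent (x * pz (S m) + y * pz (S (S m))) (x * qz (S m) + y * qz (S (S m))) ->
  (1 <= x * qz (S m) + y * qz (S (S m)))%Z ->
  (x <> - az (S m) \/ y <> 1)%Z.
Proof.
  intros Hnc Hq. destruct (Z.eq_dec x (- az (S m))), (Z.eq_dec y 1); try tauto. subst.
  exfalso. apply (not_convergent_neq m _ _ Hnc Hq); [rewrite pz_SS | rewrite qz_SS]; ring.
Qed.

(* Inside a run a_{m+1} = a_{m+2} = 1 one has 2 q_{m+1} - q_{m+2} = q_{m-1}. *)
Lemma not_convergent_coords_prev2 m x y :
  az (S m) = 1%Z -> az (S (S m)) = 1%Z ->
  not_convergent (x * pz (S (S m)) + y * pz (S (S (S m))))
                 (x * qz (S (S m)) + y * qz (S (S (S m)))) ->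
  (1 <= x * qz (S (S m)) + y * qz (S (S (S m))))%Z ->
  (x <> 2 \/ y <> -1)%Z.
Proof.
  intros H1 H2 Hnc Hq. destruct (Z.eq_dec x 2), (Z.eq_dec y (-1)); try tauto. subst.
  exfalso. apply (not_convergent_neq m _ _ Hnc Hq).
  - rewrite (pz_SS (S m)), (pz_SS m), H1, H2. ring.
  - rewrite (qz_SS (S m)), (qz_SS m), H1, H2. ring.
Qed.

Ltac coeff_cases y :=
  let Hy := fresh "Hy" in
  assert (Hy : (y <= -2 \/ y = -1 \/ y = 0 \/ y = 1 \/ 2 <= y)%Z) by lia;
  destruct Hy as [Hy|[Hy|[Hy|[Hy|Hy]]]]; try subst y; nia.

Lemma dist_ge_upto_mediant c :
  (1 <= c)%nat -> dist_ge_upto (qz c + qz (S c)) (delta c + delta (S c)).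
Proof.
  intros Hc. replace (delta c + delta (S c)) with (IZR 1 * delta c + IZR 1 * delta (S c))
    by (simpl; ring).
  apply dist_ge_upto_of_coeffs; [exact Hc|lia|].
  intros x y Hq Hnc Hxy.
  pose proof (not_convergent_coords _ _ _ Hnc (proj1 Hq)).
  pose proof (qz_pos c Hc). pose proof (qz_le_S c).
  coeff_cases y.
Qed.

Lemma dist_ge_upto_sum_double m :
  (3 <= a (S m))%nat -> dist_ge_upto (2 * qz (S m)) (delta m - delta (S m)).
Proof.
  intros Ha. assert (HA : (3 <= az (S m))%Z) by (unfold az; lia).
  replace (delta m - delta (S m))
    with (IZR (az (S m) - 1) * delta (S m) + IZR 1 * delta (S (S m)))
    by (rewrite (delta_SS m), minus_IZR; simpl; ring).
  apply dist_ge_upto_of_coeffs; [lia|pose proof (qz_le_S (S m)); lia|].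
  intros x y Hq Hnc Hxy.
  pose proof (not_convergent_coords _ _ _ Hnc (proj1 Hq)).
  pose proof (not_convergent_coords_prev _ _ _ Hnc (proj1 Hq)).
  pose proof (qz_SS m). pose proof (qz_pos (S m) ltac:(lia)). pose proof (qz_nonneg m).
  coeff_cases y.
Qed.

Lemma dist_ge_upto_double_diff m :
  (3 <= a (S m))%nat -> dist_ge_upto (qz (S (S m)) - qz (S m)) (2 * delta (S m)).
Proof.
  intros Ha. assert (HA : (3 <= az (S m))%Z) by (unfold az; lia).
  replace (2 * delta (S m)) with (IZR 2 * delta (S m) + IZR 0 * delta (S (S m)))
    by (simpl; ring).
  pose proof (qz_SS m). pose proof (qz_pos (S m) ltac:(lia)). pose proof (qz_nonneg m).
  apply dist_ge_upto_of_coeffs; [lia|lia|].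
  intros x y Hq Hnc Hxy.
  pose proof (not_convergent_coords _ _ _ Hnc (proj1 Hq)).
  pose proof (qz_le_S m).
  coeff_cases y.
Qed.

Lemma dist_ge_upto_run_double m :
  a (S m) = 1%nat -> a (S (S m)) = 1%nat ->
  dist_ge_upto (2 * qz (S m)) (delta m + delta (S (S m))).
Proof.
  intros Ha Ha'. assert (HA : az (S m) = 1%Z) by (unfold az; rewrite Ha; reflexivity).
  replace (delta m + delta (S (S m))) with (IZR 1 * delta (S m) + IZR 2 * delta (S (S m)))
    by (rewrite (delta_SS m), HA; simpl; ring).
  apply dist_ge_upto_of_coeffs; [lia|pose proof (qz_le_S (S m)); lia|].
  intros x y Hq Hnc Hxy.
  pose proof (not_convergent_coords _ _ _ Hnc (proj1 Hq)).
  pose proof (not_convergent_coords_prev _ _ _ Hnc (proj1 Hq)).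
  pose proof (qz_SS m). pose proof (qz_pos (S m) ltac:(lia)). pose proof (qz_nonneg m).
  pose proof (qz_le_S m).
  coeff_cases y.
Qed.

Lemma dist_ge_upto_double_run m :
  a (S m) = 1%nat -> dist_ge_upto (2 * qz m + qz (S m)) (2 * delta (S m)).
Proof.
  intros Ha. assert (HA : az (S m) = 1%Z) by (unfold az; rewrite Ha; reflexivity).
  replace (2 * delta (S m)) with (IZR 2 * delta (S m) + IZR 0 * delta (S (S m)))
    by (simpl; ring).
  pose proof (qz_SS m). pose proof (qz_pos (S m) ltac:(lia)). pose proof (qz_nonneg m).
  pose proof (qz_le_S m).
  apply dist_ge_upto_of_coeffs; [lia|lia|].
  intros x y Hq Hnc Hxy.
  pose proof (not_convergent_coords _ _ _ Hnc (proj1 Hq)).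
  pose proof (not_convergent_coords_prev _ _ _ Hnc (proj1 Hq)).
  coeff_cases y.
Qed.

Lemma dist_ge_upto_double_double m :
  a (S m) = 1%nat -> a (S (S m)) = 1%nat ->
  dist_ge_upto (2 * qz (S (S m))) (2 * delta (S m)).
Proof.
  intros Ha Ha'.
  assert (HA : az (S m) = 1%Z) by (unfold az; rewrite Ha; reflexivity).
  assert (HA' : az (S (S m)) = 1%Z) by (unfold az; rewrite Ha'; reflexivity).
  replace (2 * delta (S m)) with (IZR 2 * delta (S (S m)) + IZR 2 * delta (S (S (S m))))
    by (rewrite (delta_SS (S m)), HA'; simpl; ring).
  pose proof (qz_SS m). pose proof (qz_SS (S m)). pose proof (qz_pos (S m) ltac:(lia)).
  pose proof (qz_nonneg m). pose proof (qz_le_S m).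
  apply dist_ge_upto_of_coeffs; [lia|lia|].
  intros x y Hq Hnc Hxy.
  pose proof (not_convergent_coords _ _ _ Hnc (proj1 Hq)).
  pose proof (not_convergent_coords_prev _ _ _ Hnc (proj1 Hq)).
  pose proof (not_convergent_coords_prev2 _ _ _ HA HA' Hnc (proj1 Hq)).
  coeff_cases y.
Qed.

Lemma dist_ge_upto_diff_run m :
  (2 <= a (S m))%nat -> a (S (S m)) = 1%nat ->
  dist_ge_upto (2 * qz (S m) + qz (S (S m))) (delta (S m) + delta (S (S m))).
Proof.
  intros Ha Ha'.
  assert (HA : (2 <= az (S m))%Z) by (unfold az; lia).
  assert (HA' : az (S (S m)) = 1%Z) by (unfold az; rewrite Ha'; reflexivity).
  replace (delta (S m) + delta (S (S m)))
    with (IZR 2 * delta (S (S m)) + IZR 1 * delta (S (S (S m))))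
    by (rewrite (delta_SS (S m)), HA'; simpl; ring).
  pose proof (qz_SS m). pose proof (qz_SS (S m)). pose proof (qz_pos (S m) ltac:(lia)).
  pose proof (qz_nonneg m). pose proof (qz_le_S m).
  apply dist_ge_upto_of_coeffs; [lia|nia|].
  intros x y Hq Hnc Hxy.
  pose proof (not_convergent_coords _ _ _ Hnc (proj1 Hq)).
  pose proof (not_convergent_coords_prev _ _ _ Hnc (proj1 Hq)).
  coeff_cases y.
Qed.

Lemma dist_ge_upto_run_sum m :
  a (S m) = 1%nat -> (2 <= a (S (S m)))%nat ->
  dist_ge_upto (qz (S m) + qz (S (S m))) (delta m + delta (S (S m))).
Proof.
  intros Ha Ha'.
  assert (HA : az (S m) = 1%Z) by (unfold az; rewrite Ha; reflexivity).
  assert (HA' : (2 <= az (S (S m)))%Z) by (unfold az; lia).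
  assert (Hd : delta m + delta (S (S m)) = IZR 1 * delta (S m) + IZR 2 * delta (S (S m)))
    by (rewrite (delta_SS m), HA; simpl; ring).
  (* [(x, y) = (2, 0)] escapes the coefficient bound, and needs [a (S (S m)) >= 2]. *)
  assert (Hlt : 2 * delta (S (S m)) < delta (S m)).
  { rewrite (delta_SS (S m)). pose proof (delta_pos (S (S m))).
    pose proof (delta_pos (S (S (S m)))). apply IZR_le in HA'. nra. }
  rewrite Hd. apply (dist_ge_upto_of_coords (S m)); [lia|lia|].
  intros x y Hq Hnc Hxy.
  pose proof (not_convergent_coords _ _ _ Hnc (proj1 Hq)).
  pose proof (not_convergent_coords_prev _ _ _ Hnc (proj1 Hq)).
  pose proof (qz_SS m). pose proof (qz_pos (S m) ltac:(lia)). pose proof (qz_nonneg m).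
  destruct (Z.eq_dec x 2), (Z.eq_dec y 0); subst.
  - simpl. lra.
  - apply lincomb_le; [apply delta_pos|apply delta_lt_S|lia|coeff_cases y].
  - apply lincomb_le; [apply delta_pos|apply delta_lt_S|coeff_cases x|lia].
  - apply lincomb_le; [apply delta_pos|apply delta_lt_S|coeff_cases y|coeff_cases y].
Qed.

Lemma dist_ge_upto_le B B' w : dist_ge_upto B w -> (B' <= B)%Z -> dist_ge_upto B' w.
Proof. intros H HB p q Hnc Hq HqB. apply H; [exact Hnc|exact Hq|lia]. Qed.

Definition attained (e : nat * R) : Prop :=
  exists p q, not_convergent p q /\ (1 <= q)%Z /\ q = Z.of_nat (fst e) /\ dist p q = snd e.

(* Together with [attained e], this makes [snd e] the value of psi^[2] on [fst e, fst e'). *)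
Definition record_step (e e' : nat * R) : Prop :=
  (fst e <= fst e')%nat /\ snd e' < snd e /\ dist_ge_upto (Z.of_nat (fst e')) (snd e).

(* The block entries q_{n-2} + q_{n-1}, 2 q_{n-1}, q_n - q_{n-1} and 2 q_{n-2} + q_{n-1},
   each paired with the value of psi^[2] from there on. *)
Definition pt_sum n : nat * R := ((qs a (pred n) + qs a n)%nat, delta (pred n) - delta n).
Definition pt_double n : nat * R := ((2 * qs a n)%nat, 2 * delta n).
Definition pt_diff n : nat * R := ((qs a (S n) - qs a n)%nat, delta n + delta (S n)).
Definition pt_run n : nat * R :=
  ((2 * qs a (pred n) + qs a n)%nat, delta (pred n) + delta (S n)).

Lemma not_convergent_between m x y :
  (x <> 1 \/ y <> 0)%Z -> (x <> 0 \/ y <> 1)%Z ->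
  (qz m < x * qz (S m) + y * qz (S (S m)) < qz (S (S (S m))))%Z ->
  not_convergent (x * pz (S m) + y * pz (S (S m))) (x * qz (S m) + y * qz (S (S m))).
Proof.
  intros H10 H01 Hq n [Hp Hqn].
  change (Z.of_nat (pn a n)) with (pz (S n)) in Hp.
  change (Z.of_nat (qn a n)) with (qz (S n)) in Hqn.
  destruct (le_lt_dec (S n) m) as [Hn|Hn]; [pose proof (qz_le _ _ Hn); lia|].
  destruct (le_lt_dec (S n) (S (S m))) as [Hn'|Hn'];
    [|pose proof (qz_le (S (S (S m))) (S n) ltac:(lia)); lia].
  assert (S n = S m \/ S n = S (S m)) as [He|He] by lia; rewrite He in Hp, Hqn.
  - destruct (convergent_coords_eq0 (S m) (x - 1) y); lia.
  - destruct (convergent_coords_eq0 (S m) x (y - 1)); lia.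
Qed.

Lemma attained_double n : (1 <= n)%nat -> attained (pt_double n).
Proof.
  intros Hn. exists (2 * pz n)%Z, (2 * qz n)%Z. split; [|split; [|split]].
  - intros j [Hp Hq].
    change (Z.of_nat (pn a j)) with (pz (S j)) in Hp.
    change (Z.of_nat (qn a j)) with (qz (S j)) in Hq.
    pose proof (convergent_det (S j)). pose proof (alt_sign_sqr (S j)).
    rewrite <- Hp, <- Hq in *. nia.
  - pose proof (qz_pos n Hn). lia.
  - unfold pt_double, qz. cbn [fst]. lia.
  - replace (2 * pz n)%Z with (2 * pz n + 0 * pz (S n))%Z by ring.
    replace (2 * qz n)%Z with (2 * qz n + 0 * qz (S n))%Z by ring.
    rewrite dist_convergent_coords. pose proof (delta_pos n).
    simpl. rewrite Rabs_right; lra.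
Qed.

Lemma attained_sum m : (3 <= a (S m))%nat -> attained (pt_sum (S m)).
Proof.
  intros Ha. assert (HA : (3 <= az (S m))%Z) by (unfold az; lia).
  pose proof (qz_pos (S m) ltac:(lia)). pose proof (qz_nonneg m). pose proof (qz_SS m).
  pose proof (qz_SS (S m)). pose proof (qz_nonneg (S (S m))).
  pose proof (az_pos (S (S m)) ltac:(lia)).
  exists ((1 - az (S m)) * pz (S m) + 1 * pz (S (S m)))%Z,
         ((1 - az (S m)) * qz (S m) + 1 * qz (S (S m)))%Z.
  split; [|split; [|split]].
  - apply not_convergent_between; [lia|lia|]. nia.
  - nia.
  - unfold pt_sum, qz in *. cbn [fst pred]. lia.
  - rewrite dist_convergent_coords. unfold pt_sum. cbn [snd pred]. rewrite (delta_SS m).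
    pose proof (delta_pos (S m)). pose proof (delta_pos (S (S m))).
    assert (3 <= IZR (az (S m))) by (apply IZR_le; lia).
    rewrite minus_IZR, Rabs_left1 by nra. ring.
Qed.

Lemma attained_diff m : (2 <= a (S m))%nat -> attained (pt_diff (S m)).
Proof.
  intros Ha. assert (HA : (2 <= az (S m))%Z) by (unfold az; lia).
  pose proof (qz_pos (S m) ltac:(lia)). pose proof (qz_nonneg m). pose proof (qz_SS m).
  pose proof (qz_SS (S m)). pose proof (qz_le_S (S m)). pose proof (az_pos (S (S m)) ltac:(lia)).
  exists (-1 * pz (S m) + 1 * pz (S (S m)))%Z, (-1 * qz (S m) + 1 * qz (S (S m)))%Z.
  split; [|split; [|split]].
  - apply not_convergent_between; [lia|lia|nia].
  - nia.
  - unfold pt_diff, qz in *. cbn [fst]. lia.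
  - rewrite dist_convergent_coords. unfold pt_diff. cbn [snd].
    pose proof (delta_pos (S m)). pose proof (delta_pos (S (S m))).
    rewrite Rabs_left by (simpl; lra). simpl. ring.
Qed.

Lemma qz_double_le m : a m <> 1%nat -> (2 * qz m <= qz (S m))%Z.
Proof.
  intros Ha. destruct m as [|m]; [unfold qz; simpl; lia|].
  rewrite qz_SS. pose proof (a_pos (S m) ltac:(lia)).
  assert (2 <= az (S m))%Z by (unfold az; lia). pose proof (qz_nonneg (S m)).
  pose proof (qz_nonneg m). nia.
Qed.

Lemma attained_run m :
  a (S m) = 1%nat -> (a m <> 1%nat \/ (2 <= a (S (S m)))%nat) -> attained (pt_run (S m)).
Proof.
  intros Ha Hm. assert (HA : az (S m) = 1%Z) by (unfold az; rewrite Ha; reflexivity).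
  pose proof (qz_pos (S m) ltac:(lia)). pose proof (qz_nonneg m). pose proof (qz_SS m).
  pose proof (qz_SS (S m)). pose proof (qz_le_S m). pose proof (az_pos (S (S m)) ltac:(lia)).
  assert (Hlt : (2 * qz m + qz (S m) < qz (S (S (S m))))%Z).
  { destruct Hm as [Hm|Hm].
    - pose proof (qz_double_le m Hm). nia.
    - assert (2 <= az (S (S m)))%Z by (unfold az; lia). nia. }
  exists (-1 * pz (S m) + 2 * pz (S (S m)))%Z, (-1 * qz (S m) + 2 * qz (S (S m)))%Z.
  split; [|split; [|split]].
  - apply not_convergent_between; [lia|lia|nia].
  - nia.
  - unfold pt_run, qz in *. cbn [fst pred]. lia.
  - rewrite dist_convergent_coords. unfold pt_run. cbn [snd pred]. rewrite (delta_SS m), HA.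
    pose proof (delta_pos (S m)). pose proof (delta_pos (S (S m))).
    rewrite Rabs_left by (simpl; lra). simpl. ring.
Qed.

Lemma delta_SS_one k : a (S k) = 1%nat -> delta k = delta (S k) + delta (S (S k)).
Proof. intros Ha. rewrite (delta_SS k). unfold az. rewrite Ha. simpl. ring. Qed.

Lemma delta_SS_ge k v :
  (v <= a (S k))%nat -> INR v * delta (S k) + delta (S (S k)) <= delta k.
Proof.
  intros Hv. rewrite (delta_SS k). unfold az. rewrite <- INR_IZR_INZ.
  apply le_INR in Hv. pose proof (delta_pos (S k)). nra.
Qed.

Ltac step_facts m :=
  let facts k :=
    (assert (qs a (S (S k)) = a (S k) * qs a (S k) + qs a k)%nat by reflexivity;
     pose proof (qz_le_S k); pose proof (delta_pos k); pose proof (delta_lt_S k)) in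
  facts m; facts (S m); facts (S (S m)); pose proof (delta_pos (S (S (S m))));
  pose proof (qz_pos (S m) ltac:(lia)); unfold qz in *.

Ltac prove_step Hlb :=
  split; [nia|split; [lra|apply (dist_ge_upto_le _ _ _ Hlb); lia]].

Lemma step_sum_double m :
  (3 <= a (S m))%nat -> record_step (pt_sum (S m)) (pt_double (S m)).
Proof.
  intros Ha. pose proof (delta_SS_ge m 3 Ha). pose proof (dist_ge_upto_sum_double m Ha) as Hlb.
  unfold record_step, pt_sum, pt_double. cbn [fst snd pred]. step_facts m. simpl INR in *.
  prove_step Hlb.
Qed.

Lemma step_double_diff m :
  (3 <= a (S m))%nat -> record_step (pt_double (S m)) (pt_diff (S m)).
Proof.
  intros Ha. pose proof (dist_ge_upto_double_diff m Ha) as Hlb.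
  unfold record_step, pt_double, pt_diff. cbn [fst snd]. step_facts m.
  prove_step Hlb.
Qed.

Lemma step_run_double m :
  a (S m) = 1%nat -> a (S (S m)) = 1%nat -> a m <> 1%nat ->
  record_step (pt_run (S m)) (pt_double (S m)).
Proof.
  intros Ha Ha' Hm. pose proof (delta_SS_one m Ha). pose proof (delta_SS_one (S m) Ha').
  pose proof (qz_double_le m Hm). pose proof (dist_ge_upto_run_double m Ha Ha') as Hlb.
  unfold record_step, pt_run, pt_double. cbn [fst snd pred]. step_facts m.
  prove_step Hlb.
Qed.

Lemma step_double_run m :
  a (S m) = 1%nat -> a m = 1%nat -> a (S (S m)) <> 1%nat ->
  record_step (pt_double (S m)) (pt_run (S m)).
Proof.
  intros Ha Hm Ha'. destruct m as [|m]; [rewrite a_0 in Hm; discriminate|].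
  pose proof (delta_SS_one (S m) Ha).
  pose proof (delta_SS_ge (S (S m)) 2 ltac:(pose proof (a_pos (S (S (S m))) ltac:(lia)); lia)).
  pose proof (delta_pos (S (S (S (S m))))).
  pose proof (dist_ge_upto_double_run (S m) Ha) as Hlb.
  unfold record_step, pt_run, pt_double. cbn [fst snd pred]. step_facts m. simpl INR in *.
  rewrite Hm in *. prove_step Hlb.
Qed.

Lemma step_diff_sum m : record_step (pt_diff (S m)) (pt_sum (S (S m))).
Proof.
  pose proof (dist_ge_upto_mediant (S m) ltac:(lia)) as Hlb.
  unfold record_step, pt_diff, pt_sum. cbn [fst snd pred]. step_facts m.
  prove_step Hlb.
Qed.

Lemma step_diff_diff m :
  a (S (S m)) = 2%nat -> record_step (pt_diff (S m)) (pt_diff (S (S m))).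
Proof.
  intros Ha'. pose proof (dist_ge_upto_mediant (S m) ltac:(lia)) as Hlb.
  unfold record_step, pt_diff. cbn [fst snd]. step_facts m. rewrite Ha' in *.
  prove_step Hlb.
Qed.

Lemma step_diff_run m :
  (2 <= a (S m))%nat -> a (S (S m)) = 1%nat -> record_step (pt_diff (S m)) (pt_run (S (S m))).
Proof.
  intros Ha Ha'. pose proof (dist_ge_upto_diff_run m Ha Ha') as Hlb.
  unfold record_step, pt_diff, pt_run. cbn [fst snd pred]. step_facts m.
  prove_step Hlb.
Qed.

Lemma step_run_sum m :
  a (S m) = 1%nat -> (3 <= a (S (S m)))%nat -> record_step (pt_run (S m)) (pt_sum (S (S m))).
Proof.
  intros Ha Ha'. pose proof (delta_SS_one m Ha).
  pose proof (dist_ge_upto_run_sum m Ha ltac:(lia)) as Hlb.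
  unfold record_step, pt_run, pt_sum. cbn [fst snd pred]. step_facts m. rewrite Ha in *.
  prove_step Hlb.
Qed.

Lemma step_run_diff m :
  a (S m) = 1%nat -> a (S (S m)) = 2%nat -> record_step (pt_run (S m)) (pt_diff (S (S m))).
Proof.
  intros Ha Ha'. pose proof (delta_SS_one m Ha).
  pose proof (dist_ge_upto_run_sum m Ha ltac:(lia)) as Hlb.
  unfold record_step, pt_run, pt_diff. cbn [fst snd pred]. step_facts m. rewrite Ha, Ha' in *.
  prove_step Hlb.
Qed.

Lemma step_double_double m :
  a (S m) = 1%nat -> a (S (S m)) = 1%nat -> record_step (pt_double (S m)) (pt_double (S (S m))).
Proof.
  intros Ha Ha'. pose proof (dist_ge_upto_double_double m Ha Ha') as Hlb.
  unfold record_step, pt_double. cbn [fst snd]. step_facts m.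
  prove_step Hlb.
Qed.

Definition record_block (n : nat) : list (nat * R) :=
  if 3 <=? a n then [pt_sum n; pt_double n; pt_diff n]
  else if a n =? 2 then [pt_diff n]
  else match negb (a (pred n) =? 1), negb (a (S n) =? 1) with
       | true, true => [pt_run n]
       | true, false => [pt_run n; pt_double n]
       | false, false => [pt_double n]
       | false, true => [pt_double n; pt_run n]
       end.

Ltac case_block n :=
  destruct (Nat.leb_spec 3 (a n));
  [|destruct (Nat.eqb_spec (a n) 2);
    [|destruct (Nat.eqb_spec (a (pred n)) 1), (Nat.eqb_spec (a (S n)) 1)]];
  cbn [negb].

Lemma record_block_fst n : map fst (record_block n) = block a n.
Proof. unfold record_block, block. rewrite Nat.sub_1_r. case_block n; reflexivity. Qed.

Lemma record_block_nonnil n : record_block n <> [].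
Proof. unfold record_block. case_block n; discriminate. Qed.

Lemma record_block_attained n : (1 <= n)%nat -> Forall attained (record_block n).
Proof.
  intros Hn. destruct n as [|m]; [lia|]. pose proof (a_pos (S m) ltac:(lia)).
  unfold record_block. case_block (S m); cbn [pred] in *;
    repeat (apply Forall_nil || apply Forall_cons);
    first [ apply attained_double; lia
          | apply attained_sum; lia
          | apply attained_diff; lia
          | apply attained_run; [lia|]; pose proof (a_pos (S (S m)) ltac:(lia)); lia ].
Qed.

Lemma qs_le_hd_record_block n :
  (1 <= n)%nat -> (qs a n <= fst (hd (0%nat, 0%R) (record_block n)))%nat.
Proof.
  intros Hn. destruct n as [|m]; [lia|]. pose proof (a_pos (S m) ltac:(lia)).
  assert (qs a (S (S m)) = a (S m) * qs a (S m) + qs a m)%nat by reflexivity.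
  unfold record_block. case_block (S m); cbn [hd fst pt_sum pt_double pt_diff pt_run pred]; nia.
Qed.

Lemma record_block_sorted n : (1 <= n)%nat -> LocallySorted record_step (record_block n).
Proof.
  intros Hn. destruct n as [|m]; [lia|]. pose proof (a_pos (S m) ltac:(lia)).
  unfold record_block. case_block (S m); cbn [pred] in *;
    repeat (apply LSorted_nil || apply LSorted_cons1 || apply LSorted_consn);
    first [ apply step_sum_double; lia
          | apply step_double_diff; lia
          | apply step_run_double; lia
          | apply step_double_run; lia ].
Qed.

Lemma record_block_link n : (1 <= n)%nat ->
  record_step (last (record_block n) (0%nat, 0%R)) (hd (0%nat, 0%R) (record_block (S n))).
Proof.
  intros Hn. destruct n as [|m]; [lia|].
  pose proof (a_pos (S m) ltac:(lia)). pose proof (a_pos (S (S m)) ltac:(lia)).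
  unfold record_block. case_block (S m); case_block (S (S m)); cbn [pred last hd] in *;
    try lia;
    first [ apply step_diff_sum
          | apply step_diff_diff; lia
          | apply step_diff_run; lia
          | apply step_run_sum; lia
          | apply step_run_diff; lia
          | apply step_double_double; lia ].
Qed.

Definition records (N : nat) : list (nat * R) := flat_map record_block (seq 1 N).

Definition record (k : nat) : nat * R := nth k (records (S k)) (0%nat, 0%R).

Lemma records_S N : records (S N) = records N ++ record_block (S N).
Proof. unfold records. rewrite seq_S, flat_map_app. simpl. rewrite app_nil_r. reflexivity. Qed.

Lemma length_records N : (N <= length (records N))%nat.
Proof.
  induction N as [|N IH]; [simpl; lia|]. rewrite records_S, length_app.
  destruct (record_block (S N)) eqn:E; [contradiction (record_block_nonnil _ E)|simpl; lia].
Qed.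

Lemma records_prefix N M : (N <= M)%nat -> exists r, records M = records N ++ r.
Proof.
  induction 1 as [|M _ [r Hr]]; [exists []; symmetry; apply app_nil_r|].
  exists (r ++ record_block (S M)). rewrite records_S, Hr, app_assoc. reflexivity.
Qed.

Lemma nth_records k N : (S k <= N)%nat -> nth k (records N) (0%nat, 0%R) = record k.
Proof.
  intros H. destruct (records_prefix _ _ H) as [r ->]. unfold record.
  apply app_nth1. pose proof (length_records (S k)). lia.
Qed.

Lemma last_records N :
  last (records (S N)) (0%nat, 0%R) = last (record_block (S N)) (0%nat, 0%R).
Proof.
  rewrite records_S, (app_removelast_last (0%nat, 0%R) (record_block_nonnil (S N))) at 1.
  rewrite app_assoc. apply last_last.
Qed.

Lemma records_sorted N : LocallySorted record_step (records N).
Proof.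
  induction N as [|N IH]; [constructor|]. rewrite records_S.
  apply (LocallySorted_app _ _ _ _ (0%nat, 0%R) IH (record_block_sorted (S N) ltac:(lia))).
  intros Hne _. destruct N as [|N]; [contradiction|].
  rewrite last_records. apply record_block_link. lia.
Qed.

Lemma record_step_succ k : record_step (record k) (record (S k)).
Proof.
  rewrite <- (nth_records k (S (S k))), <- (nth_records (S k) (S (S k))) by lia.
  apply LocallySorted_nth; [apply records_sorted|].
  pose proof (length_records (S (S k))). lia.
Qed.

Lemma record_attained k : attained (record k).
Proof.
  assert (Hin : In (record k) (records (S k))).
  { apply nth_In. pose proof (length_records (S k)). lia. }
  unfold records in Hin. apply in_flat_map in Hin as [n [Hn He]]. apply in_seq in Hn.
  pose proof (record_block_attained n ltac:(lia)) as Hb. rewrite Forall_forall in Hb.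
  exact (Hb _ He).
Qed.

Lemma Qseq_record k : Qseq a k = fst (record k).
Proof.
  unfold Qseq, record, records.
  replace (flat_map (block a) (seq 1 (S k)))
    with (map fst (flat_map record_block (seq 1 (S k)))).
  - exact (map_nth fst _ (0%nat, 0%R) k).
  - rewrite !flat_map_concat_map, concat_map, map_map.
    f_equal. apply map_ext. apply record_block_fst.
Qed.

Lemma record_0 : fst (record 0) = 1%nat.
Proof.
  unfold record, records. simpl. rewrite app_nil_r.
  pose proof (a_pos 1 ltac:(lia)). unfold record_block. cbn [pred]. rewrite a_0.
  case_block 1%nat; try reflexivity.
  cbn. lia.
Qed.

Lemma record_unbounded t : exists k, (t < fst (record k))%nat.
Proof.
  set (L := length (records (S t))). exists L. unfold record.
  destruct (records_prefix (S (S t)) (S L)) as [r ->];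
    [pose proof (length_records (S t)); unfold L; lia|].
  rewrite records_S, <- app_assoc, app_nth2 by lia. fold L. rewrite Nat.sub_diag.
  pose proof (qs_le_hd_record_block (S (S t)) ltac:(lia)) as Hhd.
  pose proof (qz_ge_index (S t)) as Hq. unfold qz in Hq.
  destruct (record_block (S (S t))) as [|e l] eqn:E; [contradiction (record_block_nonnil _ E)|].
  simpl in *. lia.
Qed.

Lemma record_fst_le i j : (i <= j)%nat -> (fst (record i) <= fst (record j))%nat.
Proof. induction 1 as [|j _ IH]; [lia|]. destruct (record_step_succ j). lia. Qed.

Lemma record_snd_lt i j : (i < j)%nat -> snd (record j) < snd (record i).
Proof.
  induction 1 as [|j _ IH]; [apply record_step_succ|].
  destruct (record_step_succ j) as [_ [Hlt _]]. lra.
Qed.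

Lemma record_bracket t : (1 <= t)%nat -> exists k, (fst (record k) <= t < fst (record (S k)))%nat.
Proof.
  intros Ht. destruct (record_unbounded t) as [k Hk].
  induction k as [|k IH]; [rewrite record_0 in Hk; lia|].
  destruct (le_lt_dec (fst (record k)) t); [exists k; lia|exact (IH l)].
Qed.

Lemma psi2_record t k :
  (fst (record k) <= t < fst (record (S k)))%nat -> psi2 alpha a t (snd (record k)).
Proof.
  intros Ht. split.
  - destruct (record_attained k) as (p & q & Hnc & Hq1 & Hq & Hd).
    exists p, q. split; [repeat split; [exact Hq1|lia|exact Hnc]|symmetry; exact Hd].
  - intros p q (Hq1 & Hqt & Hnc). destruct (record_step_succ k) as [_ [_ Hlb]].
    apply Hlb; [exact Hnc|exact Hq1|lia].
Qed.

Lemma psi2_unique t v v' : psi2 alpha a t v -> psi2 alpha a t v' -> v = v'.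
Proof.
  intros [[p [q [Hpq ->]]] Hmin] [[p' [q' [Hpq' ->]]] Hmin'].
  apply Rle_antisym; [apply Hmin, Hpq'|apply Hmin', Hpq].
Qed.

Lemma psi2_drop_iff m : (2 <= m)%nat ->
  (exists v w, psi2 alpha a m v /\ psi2 alpha a (m - 1) w /\ v < w) <->
  (exists k, fst (record k) = m).
Proof.
  intros Hm.
  destruct (record_bracket m ltac:(lia)) as [k1 Hk1].
  destruct (record_bracket (m - 1) ltac:(lia)) as [k2 Hk2].
  pose proof (psi2_record _ _ Hk1) as Hpsi1. pose proof (psi2_record _ _ Hk2) as Hpsi2.
  split.
  - intros (v & w & Hv & Hw & Hvw).
    rewrite (psi2_unique _ _ _ Hv Hpsi1), (psi2_unique _ _ _ Hw Hpsi2) in Hvw.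
    assert (k2 < k1)%nat.
    { destruct (le_lt_dec k1 k2) as [Hle|]; [|assumption].
      destruct (Nat.eq_dec k1 k2); [subst; lra|].
      pose proof (record_snd_lt k1 k2 ltac:(lia)). lra. }
    exists k1. pose proof (record_fst_le (S k2) k1 ltac:(lia)). lia.
  - intros [k Hk]. exists (snd (record k1)), (snd (record k2)).
    split; [assumption|split; [assumption|]]. apply record_snd_lt.
    assert (k <= k1)%nat by (destruct (le_lt_dec k k1); [assumption|];
                             pose proof (record_fst_le (S k1) k ltac:(lia)); lia).
    assert (k2 < k)%nat by (destruct (le_lt_dec k k2); [|assumption];
                            pose proof (record_fst_le k k2 ltac:(lia)); lia).
    lia.
Qed.

Lemma Qseq_le i j : (i <= j)%nat -> (Qseq a i <= Qseq a j)%nat.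
Proof. rewrite !Qseq_record. apply record_fst_le. Qed.

Lemma inQ_iff_Qseq m : inQ alpha a m <-> exists k, Qseq a k = m.
Proof.
  setoid_rewrite Qseq_record. split.
  - intros [-> | [Hm Hdrop]]; [exists 0%nat; apply record_0|].
    apply (psi2_drop_iff m Hm), Hdrop.
  - intros [k Hk]. pose proof (record_fst_le 0 k ltac:(lia)). rewrite record_0 in *.
    destruct (Nat.eq_dec m 1) as [|Hm1]; [left; assumption|right].
    split; [lia|]. apply psi2_drop_iff; [lia|exists k; exact Hk].
Qed.

End ContinuedFraction.

Theorem mainTheorem1 (alpha : R) (a : nat -> nat)
  (Halpha : 0 < alpha < 1) (Hirr : irrational alpha)
  (Ha0 : a 0%nat = 0%nat)
  (Hapos : forall n : nat, (1 <= n)%nat -> (1 <= a n)%nat)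
  (Hcf : Un_cv (fun n => INR (pn a n) / INR (qn a n)) alpha) :
  (forall j k : nat, (j < k)%nat ->
     (forall i : nat, (i < k)%nat -> Qseq a i <> Qseq a k) ->
     (Qseq a j < Qseq a k)%nat) /\
  (forall m : nat, inQ alpha a m <-> exists k : nat, Qseq a k = m).
Proof.
  pose proof (Qseq_le a alpha Ha0 Hapos Hirr Hcf) as Hle.
  split; [|exact (inQ_iff_Qseq a alpha Ha0 Hapos Hirr Hcf)].
  intros j k Hjk Hnew. specialize (Hnew (k - 1)%nat ltac:(lia)).
  pose proof (Hle j (k - 1)%nat ltac:(lia)). pose proof (Hle (k - 1)%nat k ltac:(lia)).
  lia.
Qed.
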